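(* Let $k$ be an algebraically closed field with $\operatorname{char}(k)\neq 2$, let $\alpha\in k$ with $\alpha(1-\alpha^2)\neq 0$, and let $A(\alpha)$ be the $k$-algebra on degree-one generators $x_1,\dots,x_4$ with defining relations \[ x_3x_1+x_1x_3=0,\quad x_3x_2-x_2x_3=0,\quad 2x_2^2+\alpha x_3^2=x_1^2,\quad x_4x_1+x_1x_4=0,\quad x_2^2-x_4^2=0,\quad x_4x_2+x_2x_4=x_3^2 . \] Let $\Gamma\subset\mathbb P^3\times\mathbb P^3$ be the point scheme of $A(\alpha)$, i.e. the zero locus of these six relations, where $\sum c_{ij}x_ix_j$ is evaluated at $(p,q)$ as $\sum c_{ij}p_iq_j$. Let $\mathfrak p$ be the projection of $\Gamma$ to the first factor and $\sigma$ the automorphism of $\mathfrak p$ whose graph is $\Gamma$. Then the points of $\Gamma$ are closed, of the form $(q,\sigma(q))$, and are exactly: (o) $(e_1,e_2),(e_2,e_1),(e_3,e_4),(e_4,e_3)$, where $e_1,\dots,e_4$ are the coordinate points; (i) $((\lambda_1,1,\lambda_3,1),(-\lambda_1,1,\lambda_3,1))$ with $\lambda_1^2=-2(1+\alpha)$, $\lambda_3^2=2$; (ii) $((\lambda_1,-1,\lambda_3,1),(-\lambda_1,-1,\lambda_3,1))$ with $\lambda_1^2=-2(1-\alpha)$, $\lambda_3^2=-2$; (iii) $((\lambda_1,\lambda_2,0,1),(-\lambda_1,-\lambda_2,0,1))$ with $\lambda_1^2=-2$, $\lambda_2^2=-1$; (iv) $((0,\lambda_2,\lambda_3,1),(0,\lambda_2,\lambda_3,\lambda_2^2))$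 with $\alpha\lambda_2^2+2\lambda_2+\alpha=0$, $\alpha\lambda_3^2=-2\lambda_2^2$. Furthermore, $\sigma(Z_i)=Z_i$ for every $i=0,\dots,4$, and $\sigma$ has ten orbits of order two, where $Z_0=\{e_1,\dots,e_4\}$ and $Z_1,\dots,Z_4$ are the sets of first coordinates of the points listed in (i)–(iv) respectively.
   Context: It is known (and used by the paper) that for this algebra $\Gamma$ is the graph of an automorphism $\sigma$ of $\mathfrak p$. *)

From HB Require Import structures.
From mathcomp Require Import all_boot all_order all_algebra.
Set Implicit Arguments. Unset Strict Implicit. Unset Printing Implicit Defensive.
Import Order.TTheory GRing.Theory Num.Theory.
Local Open Scope ring_scope.

Section Defs.
Variable k : fieldType.

(* A vector of k^4; coordinates x_1..x_4 are indices 0..3. *)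
Definition co (p : 'rV[k]_4) (i : nat) : k := p ord0 (inord i).

Definition pt4 (a b c d : k) : 'rV[k]_4 := \row_(i < 4) nth 0 [:: a; b; c; d] i.

(* equality as points of P^3 (for nonzero vectors) *)
Definition peq (p q : 'rV[k]_4) : Prop := exists c : k, c != 0 /\ q = c *: p.

Definition inGamma (al : k) (p q : 'rV[k]_4) : Prop :=
  [/\ p != 0, q != 0,
      co p 2 * co q 0 + co p 0 * co q 2 = 0,
      co p 2 * co q 1 - co p 1 * co q 2 = 0 &
      [/\ 2 * (co p 1 * co q 1) + al * (co p 2 * co q 2) = co p 0 * co q 0,
      co p 3 * co q 0 + co p 0 * co q 3 = 0,
      co p 1 * co q 1 - co p 3 * co q 3 = 0 &
      co p 3 * co q 1 + co p 1 * co q 3 = co p 2 * co q 2]].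

Definition e1 : 'rV[k]_4 := pt4 1 0 0 0.
Definition e2 : 'rV[k]_4 := pt4 0 1 0 0.
Definition e3 : 'rV[k]_4 := pt4 0 0 1 0.
Definition e4 : 'rV[k]_4 := pt4 0 0 0 1.

Definition Gamma_listed (al : k) (p q : 'rV[k]_4) : Prop :=
  [\/ [\/ peq p e1 /\ peq q e2, peq p e2 /\ peq q e1,
          peq p e3 /\ peq q e4 | peq p e4 /\ peq q e3],
      exists l1 l3 : k, [/\ l1 ^+ 2 = - 2 * (1 + al), l3 ^+ 2 = 2,
          peq p (pt4 l1 1 l3 1) & peq q (pt4 (- l1) 1 l3 1)],
      exists l1 l3 : k, [/\ l1 ^+ 2 = - 2 * (1 - al), l3 ^+ 2 = - 2,
          peq p (pt4 l1 (-1) l3 1) & peq q (pt4 (- l1) (-1) l3 1)] |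
      (exists l1 l2 : k, [/\ l1 ^+ 2 = - 2, l2 ^+ 2 = - 1,
          peq p (pt4 l1 l2 0 1) & peq q (pt4 (- l1) (- l2) 0 1)] \/
      exists l2 l3 : k, [/\ al * l2 ^+ 2 + 2 * l2 + al = 0,
          al * l3 ^+ 2 = - 2 * l2 ^+ 2,
          peq p (pt4 0 l2 l3 1) & peq q (pt4 0 l2 l3 (l2 ^+ 2))])].

Definition inZ (al : k) (i : 'I_5) (p : 'rV[k]_4) : Prop :=
  match val i with
  | 0%N => [\/ peq p e1, peq p e2, peq p e3 | peq p e4]
  | 1%N => exists l1 l3 : k, [/\ l1 ^+ 2 = - 2 * (1 + al), l3 ^+ 2 = 2 &
          peq p (pt4 l1 1 l3 1)]
  | 2%N => exists l1 l3 : k, [/\ l1 ^+ 2 = - 2 * (1 - al), l3 ^+ 2 = - 2 &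
          peq p (pt4 l1 (-1) l3 1)]
  | 3%N => exists l1 l2 : k, [/\ l1 ^+ 2 = - 2, l2 ^+ 2 = - 1 &
          peq p (pt4 l1 l2 0 1)]
  | _ => exists l2 l3 : k, [/\ al * l2 ^+ 2 + 2 * l2 + al = 0,
          al * l3 ^+ 2 = - 2 * l2 ^+ 2 & peq p (pt4 0 l2 l3 1)]
  end.

End Defs.

(* Each defining relation of A(alpha) is bilinear in (p, q) and, up to sign, invariant
   under exchanging p and q, so Gamma is symmetric and invariant under rescaling.  Solving
   the six relations by cases on the vanishing of x1(p), x1(q), then x4 or x3, determines
   q up to scale as an explicit function sigma(p), so Gamma is a graph, and forces p into
   one of the families (o)-(iv).  Over an algebraically closed field these families
   consist of twenty pairwise non-proportional points; by symmetry sigma is an involution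
   without fixed points, hence has ten orbits of size two. *)

From HB Require Import structures.
From mathcomp Require Import all_boot all_order all_algebra.
From mathcomp Require Import ring.
Import Order.TTheory GRing.Theory Num.Theory.
Local Open Scope ring_scope.

Lemma lincomb1 {k : fieldType} (m : k) {U V W Z : k} :
  U = V -> W - Z = m * (U - V) -> W = Z.
Proof. by move=> -> /eqP; rewrite subrr mulr0 subr_eq0 => /eqP. Qed.

Lemma lincomb2 {k : fieldType} (m1 m2 : k) {U1 V1 U2 V2 W Z : k} : U1 = V1 -> U2 = V2 ->
  W - Z = m1 * (U1 - V1) + m2 * (U2 - V2) -> W = Z.
Proof. by move=> -> -> /eqP; rewrite !subrr !mulr0 addr0 subr_eq0 => /eqP. Qed.

Set Implicit Arguments. Unset Strict Implicit.

Ltac neq0 := rewrite ?(mulf_eq0, invr_eq0, oppr_eq0, expf_eq0) ?negb_or /=;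
  repeat (apply/andP; split); done.
Ltac field_neq0 := field; neq0.
Ltac zero_simpl H := rewrite ?(mul0r, mulr0, add0r, addr0, sub0r, subr0, oppr0) in H.

Section Coordinates.
Variable k : fieldType.
Implicit Types (p q : 'rV[k]_4) (a b c d x y : k).

Lemma co_pt4_0 a b c d : co (pt4 a b c d) 0 = a.
Proof. by rewrite /co /pt4 mxE inordK. Qed.
Lemma co_pt4_1 a b c d : co (pt4 a b c d) 1 = b.
Proof. by rewrite /co /pt4 mxE inordK. Qed.
Lemma co_pt4_2 a b c d : co (pt4 a b c d) 2 = c.
Proof. by rewrite /co /pt4 mxE inordK. Qed.
Lemma co_pt4_3 a b c d : co (pt4 a b c d) 3 = d.
Proof. by rewrite /co /pt4 mxE inordK. Qed.
Definition co_pt4E := (co_pt4_0, co_pt4_1, co_pt4_2, co_pt4_3).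

Lemma pt4_surj p : exists a b c d, p = pt4 a b c d.
Proof.
exists (co p 0), (co p 1), (co p 2), (co p 3).
apply/rowP => i; rewrite /co /pt4 !mxE (ord1 ord0).
by case: i => [[|[|[|[|i]]]] Hi] //=; congr (p _ _); apply: val_inj; rewrite /= inordK.
Qed.

Lemma pt4_inj a b c d a' b' c' d' : pt4 a b c d = pt4 a' b' c' d' ->
  [/\ a = a', b = b', c = c' & d = d'].
Proof.
move=> E; have co_eq i : co (pt4 a b c d) i = co (pt4 a' b' c' d') i by rewrite E.
by split; [move: (co_eq 0%N) | move: (co_eq 1%N) | move: (co_eq 2%N) | move: (co_eq 3%N)];
  rewrite !co_pt4E.
Qed.

Lemma pt4_eq0 a b c d : (pt4 a b c d == 0) = [&& a == 0, b == 0, c == 0 & d == 0].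
Proof.
have -> : 0 = pt4 0 0 0 0 :> 'rV[k]_4.
  by apply/rowP => i; rewrite !mxE; case: i => [[|[|[|[|i]]]] Hi].
by apply/eqP/and4P => [/pt4_inj[-> -> -> ->]|[/eqP-> /eqP-> /eqP-> /eqP->]].
Qed.

Lemma scale_pt4 x a b c d : x *: pt4 a b c d = pt4 (x * a) (x * b) (x * c) (x * d).
Proof.
apply/rowP => i; rewrite /pt4 !mxE.
by case: i => [[|[|[|[|i]]]] Hi] //=; rewrite mulr0.
Qed.

Lemma peq_pt4 a b c d a' b' c' d' :
  peq (pt4 a b c d) (pt4 a' b' c' d') <->
  exists x, [/\ x != 0, a' = x * a, b' = x * b, c' = x * c & d' = x * d].
Proof.
split=> [[x [x0]]|[x [x0 -> -> -> ->]]]; last by exists x; rewrite scale_pt4.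
by rewrite scale_pt4 => /pt4_inj[*]; exists x.
Qed.

Lemma peq_refl p : peq p p.
Proof. by exists 1; rewrite oner_eq0 scale1r. Qed.

Lemma peq_sym p q : peq p q -> peq q p.
Proof.
case=> x [x0 ->]; exists x^-1; split; first by rewrite invr_eq0.
by rewrite scalerA mulVf // scale1r.
Qed.

Lemma peq_trans p q r : peq p q -> peq q r -> peq p r.
Proof.
case=> x [x0 ->] [y [y0 ->]]; exists (y * x); split; first by rewrite mulf_neq0.
by rewrite scalerA.
Qed.

Lemma peq_pt4_cross a b c d a' b' c' d' :
  peq (pt4 a b c d) (pt4 a' b' c' d') ->
  [/\ a * d' = d * a', b * d' = d * b', c * d' = d * c' &
       [/\ a * b' = b * a', a * c' = c * a' & b * c' = c * b']].
Proof. by case/peq_pt4 => x [_ -> -> -> ->]; split; [..|split]; ring. Qed.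

End Coordinates.

Section FieldFacts.
Variable k : fieldType.
Implicit Types (a b r x y al : k).

Lemma mulfI0 a b : a != 0 -> a * b = 0 -> b = 0.
Proof. by move=> a0 /eqP; rewrite mulf_eq0 (negbTE a0) => /eqP. Qed.

Lemma mulIf0 a b : b != 0 -> a * b = 0 -> a = 0.
Proof. by move=> b0 /eqP; rewrite mulf_eq0 (negbTE b0) orbF => /eqP. Qed.

Lemma oppr_eq0_eq a : - a = 0 -> a = 0.
Proof. by move/eqP; rewrite oppr_eq0 => /eqP. Qed.

Lemma sqr_root_neq0 x a : x ^+ 2 = a -> a != 0 -> x != 0.
Proof. by move=> <-; apply: contra_neq => ->; rewrite expr0n. Qed.

Lemma sqrf_eq_cases x y : x ^+ 2 = y ^+ 2 -> x = y \/ x = - y.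
Proof. by move/eqP; rewrite eqf_sqr => /orP[/eqP|/eqP]; [left | right]. Qed.

Lemma neq_oppr a : (2%:R : k) != 0 -> a != 0 -> a != - a.
Proof.
move=> h2 a0; apply: contra_neq (mulf_neq0 h2 a0) => aE.
by rewrite mulr_natl mulr2n {1}aE addNr.
Qed.

Lemma palindromic_root_neq0 al r : al != 0 -> al * r ^+ 2 + 2 * r + al = 0 -> r != 0.
Proof.
by move=> al0 hr; apply: contra_eq_neq hr => ->; rewrite expr0n /= !mulr0 !add0r.
Qed.

Lemma palindromic_roots al r y : al != 0 -> al * r ^+ 2 + 2 * r + al = 0 ->
  al * y ^+ 2 + 2 * y + al = 0 -> y = r \/ y = r^-1.
Proof.
move=> al0 hr hy; have r0 := palindromic_root_neq0 al0 hr.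
have : (y - r) * (al * (y + r) + 2) = 0 by apply: (lincomb2 1 (-1) hy hr); ring.
move/eqP; rewrite mulf_eq0 subr_eq0 => /orP[/eqP|/eqP yr]; first by left.
by right; apply: (lincomb2 al^-1 (- (al * r)^-1) yr hr); field_neq0.
Qed.

End FieldFacts.

Section Gamma.
Variables (k : fieldType) (al : k).
Implicit Types (p q : 'rV[k]_4).

Lemma inGammaE a1 a2 a3 a4 b1 b2 b3 b4 :
  inGamma al (pt4 a1 a2 a3 a4) (pt4 b1 b2 b3 b4) <->
  [/\ ~~ [&& a1 == 0, a2 == 0, a3 == 0 & a4 == 0],
      ~~ [&& b1 == 0, b2 == 0, b3 == 0 & b4 == 0],
      a3 * b1 + a1 * b3 = 0,
      a3 * b2 - a2 * b3 = 0 &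
      [/\ 2 * (a2 * b2) + al * (a3 * b3) = a1 * b1,
      a4 * b1 + a1 * b4 = 0,
      a2 * b2 - a4 * b4 = 0 &
      a4 * b2 + a2 * b4 = a3 * b3]].
Proof. by rewrite /inGamma !co_pt4E !pt4_eq0. Qed.

Lemma inGamma_sym p q : inGamma al p q -> inGamma al q p.
Proof.
have [a1 [a2 [a3 [a4 ->]]]] := pt4_surj p; have [b1 [b2 [b3 [b4 ->]]]] := pt4_surj q.
case/inGammaE => pa pb R1 R2 [R3 R4 R5 R6].
apply/inGammaE; split=> //; first by apply: (lincomb1 1 R1); ring.
  by apply: (lincomb1 (-1) R2); ring.
by split; [apply: (lincomb1 1 R3) | apply: (lincomb1 1 R4) |
           apply: (lincomb1 1 R5) | apply: (lincomb1 1 R6)]; ring.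
Qed.

Lemma inGamma_scale p p' q : inGamma al p q -> peq p p' -> inGamma al p' q.
Proof.
have [a1 [a2 [a3 [a4 ->]]]] := pt4_surj p; have [b1 [b2 [b3 [b4 ->]]]] := pt4_surj q.
case/inGammaE => pa pb R1 R2 [R3 R4 R5 R6] [x [x0 ->]].
rewrite scale_pt4; apply/inGammaE; split=> //; first by rewrite !mulf_eq0 (negbTE x0).
- by apply: (lincomb1 x R1); ring.
- by apply: (lincomb1 x R2); ring.
by split; [apply: (lincomb1 x R3) | apply: (lincomb1 x R4) |
           apply: (lincomb1 x R5) | apply: (lincomb1 x R6)]; ring.
Qed.

Lemma inGamma_peq p q p' q' :
  inGamma al p q -> peq p p' -> peq q q' -> inGamma al p' q'.
Proof.
move=> G pp' qq'; apply/inGamma_sym/(inGamma_scale _ qq').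
exact/inGamma_sym/(inGamma_scale G pp').
Qed.

Lemma inGamma_e1e2 : inGamma al (e1 k) (e2 k).
Proof. by apply/inGammaE; rewrite oner_eq0 !andbF; split=> //; try split; ring. Qed.

Lemma inGamma_e3e4 : inGamma al (e3 k) (e4 k).
Proof. by apply/inGammaE; rewrite oner_eq0 !andbF; split=> //; try split; ring. Qed.

Lemma inGamma_i l1 l3 : l1 ^+ 2 = - 2 * (1 + al) -> l3 ^+ 2 = 2 ->
  inGamma al (pt4 l1 1 l3 1) (pt4 (- l1) 1 l3 1).
Proof.
move=> h1 h3; apply/inGammaE; rewrite oner_eq0 !andbF; split=> //; try ring.
by split; [apply: (lincomb2 1 al h1 h3) | | | apply: (lincomb1 (-1) h3)]; ring.
Qed.

Lemma inGamma_ii l1 l3 : l1 ^+ 2 = - 2 * (1 - al) -> l3 ^+ 2 = - 2 ->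
  inGamma al (pt4 l1 (-1) l3 1) (pt4 (- l1) (-1) l3 1).
Proof.
move=> h1 h3; apply/inGammaE; rewrite oner_eq0 !andbF; split=> //; try ring.
by split; [apply: (lincomb2 1 al h1 h3) | | | apply: (lincomb1 (-1) h3)]; ring.
Qed.

Lemma inGamma_iii l1 l2 : l1 ^+ 2 = - 2 -> l2 ^+ 2 = - 1 ->
  inGamma al (pt4 l1 l2 0 1) (pt4 (- l1) (- l2) 0 1).
Proof.
move=> h1 h2; apply/inGammaE; rewrite oner_eq0 !andbF; split=> //; try ring.
by split; [apply: (lincomb2 1 (-2) h1 h2) | | apply: (lincomb1 (-1) h2) | ]; ring.
Qed.

Lemma inGamma_iv l2 l3 : al != 0 -> al * l2 ^+ 2 + 2 * l2 + al = 0 ->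
  al * l3 ^+ 2 = - 2 * l2 ^+ 2 ->
  inGamma al (pt4 0 l2 l3 1) (pt4 0 l2 l3 (l2 ^+ 2)).
Proof.
move=> al0 hq h3; have l2n := palindromic_root_neq0 al0 hq.
apply/inGammaE; rewrite oner_eq0 expf_eq0 (negbTE l2n) !andbF; split=> //; try ring.
split; [apply: (lincomb1 1 h3) | | | apply: (lincomb2 (l2 / al) (- al^-1) hq h3)];
  field_neq0.
Qed.

Lemma listed_inGamma p q : al != 0 -> Gamma_listed al p q -> inGamma al p q.
Proof.
move=> al0; case.
- case=> -[hp hq]; apply: inGamma_peq (peq_sym hp) (peq_sym hq);
  by [exact: inGamma_e1e2 | exact/inGamma_sym/inGamma_e1e2 |
      exact: inGamma_e3e4 | exact/inGamma_sym/inGamma_e3e4].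
- case=> l1 [l3 [h1 h3 hp hq]].
  exact: inGamma_peq (inGamma_i h1 h3) (peq_sym hp) (peq_sym hq).
- case=> l1 [l3 [h1 h3 hp hq]].
  exact: inGamma_peq (inGamma_ii h1 h3) (peq_sym hp) (peq_sym hq).
- case=> l1 [l2 [[h1 h2 hp hq] | [m2 [m3 [hm2 hm3 hp hq]]]]].
  + exact: inGamma_peq (inGamma_iii h1 h2) (peq_sym hp) (peq_sym hq).
  + exact: inGamma_peq (inGamma_iv al0 hm2 hm3) (peq_sym hp) (peq_sym hq).
Qed.

End Gamma.

Section Classification.
Variables (k : fieldType) (al : k).
Hypotheses (hchar : (2%:R : k) != 0) (al0 : al != 0).
Implicit Types (p q : 'rV[k]_4).

Definition sigma p : 'rV[k]_4 :=
  if co p 0 == 0 then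
    if co p 3 == 0 then (if co p 1 == 0 then e4 k else e1 k)
    else if co p 1 == 0 then e3 k else pt4 0 (co p 1) (co p 2) (co p 1 ^+ 2 / co p 3)
  else if co p 3 == 0 then e2 k
  else pt4 (- co p 0) (if co p 2 == 0 then - co p 1 else co p 1) (co p 2) (co p 3).

Definition Gamma_classified p q := peq (sigma p) q /\ Gamma_listed al p q.

Lemma classify_e1e2 a1 a2 a3 a4 b2 b3 b4 : a1 != 0 ->
  inGamma al (pt4 a1 a2 a3 a4) (pt4 0 b2 b3 b4) ->
  Gamma_classified (pt4 a1 a2 a3 a4) (pt4 0 b2 b3 b4).
Proof.
move=> a1n /inGammaE[_ pb R1 R2 [R3 R4 R5 R6]].
zero_simpl R1; zero_simpl R4; zero_simpl R3.
have b30 := mulfI0 a1n R1; have b40 := mulfI0 a1n R4; subst b3 b4.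
have b2n : b2 != 0 by move: pb; rewrite eqxx /= andbT.
have a20 : a2 = 0 by zero_simpl R3; apply: mulIf0 b2n (mulfI0 hchar R3).
subst a2; zero_simpl R2; zero_simpl R6.
have a30 := mulIf0 b2n R2; have a40 := mulIf0 b2n R6; subst a3 a4.
rewrite /Gamma_classified /sigma !co_pt4E (negbTE a1n) eqxx.
split; first by apply/peq_pt4; exists b2; split=> //; ring.
apply: Or41; apply: Or41; split; apply/peq_pt4.
  by exists a1^-1; split; [neq0 | field_neq0 ..].
by exists b2^-1; split; [neq0 | field_neq0 ..].
Qed.

Lemma classify_e2e1 a2 a3 a4 b1 b2 b3 b4 : b1 != 0 ->
  inGamma al (pt4 0 a2 a3 a4) (pt4 b1 b2 b3 b4) ->
  Gamma_classified (pt4 0 a2 a3 a4) (pt4 b1 b2 b3 b4).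
Proof.
move=> b1n /inGammaE[pa _ R1 R2 [R3 R4 R5 R6]]; zero_simpl R1; zero_simpl R4.
have a30 := mulIf0 b1n R1; have a40 := mulIf0 b1n R4; subst a3 a4.
have a2n : a2 != 0 by move: pa; rewrite eqxx /= andbT.
zero_simpl R3; have b20 := mulfI0 a2n (mulfI0 hchar R3); subst b2.
zero_simpl R2; zero_simpl R6.
have b30 := mulfI0 a2n (oppr_eq0_eq R2); have b40 := mulfI0 a2n R6; subst b3 b4.
rewrite /Gamma_classified /sigma !co_pt4E (negbTE a2n) eqxx.
split; first by apply/peq_pt4; exists b1; split=> //; ring.
apply: Or41; apply: Or42; split; apply/peq_pt4.
  by exists a2^-1; split; [neq0 | field_neq0 ..].
by exists b1^-1; split; [neq0 | field_neq0 ..].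
Qed.

Lemma classify_e3e4 a2 a3 b2 b3 b4 :
  inGamma al (pt4 0 a2 a3 0) (pt4 0 b2 b3 b4) ->
  Gamma_classified (pt4 0 a2 a3 0) (pt4 0 b2 b3 b4).
Proof.
move=> /inGammaE[pa pb _ R2 [R3 _ R5 R6]]; zero_simpl R5; zero_simpl R6.
rewrite R5 in R3; zero_simpl R3; have a3b3 := mulfI0 al0 R3; rewrite a3b3 in R6.
have [a20|a2n] := eqVneq a2 0; last first.
  have b20 := mulfI0 a2n R5; have b40 := mulfI0 a2n R6; subst b2 b4.
  zero_simpl R2; have b30 := mulfI0 a2n (oppr_eq0_eq R2); subst b3.
  by rewrite !eqxx in pb.
subst a2; zero_simpl R2.
have a3n : a3 != 0 by move: pa; rewrite !eqxx /= andbT.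
have b20 := mulfI0 a3n R2; have b30 := mulfI0 a3n a3b3; subst b2 b3.
have b4n : b4 != 0 by move: pb; rewrite !eqxx.
rewrite /Gamma_classified /sigma !co_pt4E !eqxx.
split; first by apply/peq_pt4; exists b4; split=> //; ring.
apply: Or41; apply: Or43; split; apply/peq_pt4.
  by exists a3^-1; split; [neq0 | field_neq0 ..].
by exists b4^-1; split; [neq0 | field_neq0 ..].
Qed.

Lemma classify_e4e3 a2 a3 a4 b2 b3 : a4 != 0 ->
  inGamma al (pt4 0 a2 a3 a4) (pt4 0 b2 b3 0) ->
  Gamma_classified (pt4 0 a2 a3 a4) (pt4 0 b2 b3 0).
Proof.
move=> a4n /inGammaE[_ pb _ R2 [R3 _ R5 R6]]; zero_simpl R5; zero_simpl R6.
rewrite R5 in R3; zero_simpl R3; have a3b3 := mulfI0 al0 R3; rewrite a3b3 in R6.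
have b20 := mulfI0 a4n R6; subst b2.
have b3n : b3 != 0 by move: pb; rewrite !eqxx /= andbT.
have a30 := mulIf0 b3n a3b3; subst a3; zero_simpl R2.
have a20 := mulIf0 b3n (oppr_eq0_eq R2); subst a2.
rewrite /Gamma_classified /sigma !co_pt4E (negbTE a4n) !eqxx.
split; first by apply/peq_pt4; exists b3; split=> //; ring.
apply: Or41; apply: Or44; split; apply/peq_pt4.
  by exists a4^-1; split; [neq0 | field_neq0 ..].
by exists b3^-1; split; [neq0 | field_neq0 ..].
Qed.

Lemma classify_iv a2 a3 a4 b2 b3 b4 : a4 != 0 -> b4 != 0 ->
  inGamma al (pt4 0 a2 a3 a4) (pt4 0 b2 b3 b4) ->
  Gamma_classified (pt4 0 a2 a3 a4) (pt4 0 b2 b3 b4).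
Proof.
move=> a4n b4n /inGammaE[_ _ _ R2 [R3 _ R5 R6]]; zero_simpl R3.
have a2b2 : a2 * b2 != 0.
  by apply: contra_neq (mulf_neq0 a4n b4n) => a2b20; move: R5; rewrite a2b20 sub0r => /oppr_eq0_eq.
have [a2n b2n] : a2 != 0 /\ b2 != 0 by apply/andP; rewrite -negb_or -mulf_eq0.
have eb4 : b4 = a2 * b2 / a4 by apply: (lincomb1 (- a4^-1) R5); field_neq0.
have eb3 : b3 = a3 * b2 / a2 by apply: (lincomb1 (- a2^-1) R2); field_neq0.
subst b3 b4.
have h3 : al * a3 ^+ 2 = - 2 * a2 ^+ 2 by apply: (lincomb1 (a2 / b2) R3); field_neq0.
have h6 : a3 ^+ 2 * a4 = a2 * (a4 ^+ 2 + a2 ^+ 2).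
  by apply: (lincomb1 (- (a2 * a4) / b2) R6); field_neq0.
rewrite /Gamma_classified /sigma !co_pt4E (negbTE a4n) (negbTE a2n) eqxx.
split; first by apply/peq_pt4; exists (b2 / a2); split; [neq0 | field_neq0 ..].
(* In [Gamma_listed] the binder of family (iii) also scopes over family (iv). *)
apply: Or44; exists 0, 0; right; exists (a2 / a4), (a3 / a4); split.
- apply: (lincomb2 ((a2 * a4)^-1) (- al / (a2 * a4 ^+ 2)) h3 h6); field_neq0.
- apply: (lincomb1 ((a4 ^+ 2)^-1) h3); field_neq0.
- apply/peq_pt4; exists a4^-1; split; [neq0 | field_neq0 ..].
- apply/peq_pt4; exists (a2 / (a4 * b2)); split; [neq0 | field_neq0 ..].
Qed.

Lemma classify_iii a1 a2 a4 b1 b2 b3 b4 : a1 != 0 -> b1 != 0 ->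
  inGamma al (pt4 a1 a2 0 a4) (pt4 b1 b2 b3 b4) ->
  Gamma_classified (pt4 a1 a2 0 a4) (pt4 b1 b2 b3 b4).
Proof.
move=> a1n b1n /inGammaE[_ _ R1 _ [R3 R4 R5 R6]]; zero_simpl R1.
have b30 := mulfI0 a1n R1; subst b3.
have eb4 : b4 = - a4 * b1 / a1 by apply: (lincomb1 a1^-1 R4); field_neq0.
subst b4.
have h1 : a1 ^+ 2 = - 2 * a4 ^+ 2.
  by apply: (lincomb2 (- a1 / b1) (2 * a1 / b1) R3 R5); field_neq0.
have a4n : a4 != 0.
  by apply: contra_neq (expf_neq0 2 a1n) => a40; rewrite h1 a40 expr0n /= mulr0.
have eb2 : b2 = a2 * b1 / a1 by apply: (lincomb1 a4^-1 R6); field_neq0.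
subst b2.
have h5 : a2 ^+ 2 = - a4 ^+ 2 by apply: (lincomb1 (a1 / b1) R5); field_neq0.
rewrite /Gamma_classified /sigma !co_pt4E (negbTE a1n) (negbTE a4n) eqxx.
split; first by apply/peq_pt4; exists (- b1 / a1); split; [neq0 | field_neq0 ..].
apply: Or44; exists (a1 / a4), (a2 / a4); left; split.
- apply: (lincomb1 ((a4 ^+ 2)^-1) h1); field_neq0.
- apply: (lincomb1 ((a4 ^+ 2)^-1) h5); field_neq0.
- apply/peq_pt4; exists a4^-1; split; [neq0 | field_neq0 ..].
- apply/peq_pt4; exists (- a1 / (b1 * a4)); split; [neq0 | field_neq0 ..].
Qed.

Lemma classify_i_ii a1 a2 a3 a4 b1 b2 b3 b4 : a1 != 0 -> b1 != 0 -> a3 != 0 ->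
  inGamma al (pt4 a1 a2 a3 a4) (pt4 b1 b2 b3 b4) ->
  Gamma_classified (pt4 a1 a2 a3 a4) (pt4 b1 b2 b3 b4).
Proof.
move=> a1n b1n a3n /inGammaE[_ _ R1 R2 [R3 R4 R5 R6]].
have eb3 : b3 = - a3 * b1 / a1 by apply: (lincomb1 a1^-1 R1); field_neq0.
have eb4 : b4 = - a4 * b1 / a1 by apply: (lincomb1 a1^-1 R4); field_neq0.
subst b3 b4.
have eb2 : b2 = - a2 * b1 / a1 by apply: (lincomb1 a3^-1 R2); field_neq0.
subst b2.
have h5 : a2 ^+ 2 = a4 ^+ 2 by apply: (lincomb1 (- a1 / b1) R5); field_neq0.
have h6 : a3 ^+ 2 = 2 * a2 * a4 by apply: (lincomb1 (a1 / b1) R6); field_neq0.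
have h3 : a1 ^+ 2 = - (2 * a2 ^+ 2 + al * a3 ^+ 2).
  by apply: (lincomb1 (- a1 / b1) R3); field_neq0.
have a4n : a4 != 0.
  by apply: contra_neq (expf_neq0 2 a3n) => a40; rewrite h6 a40 mulr0.
rewrite /Gamma_classified /sigma !co_pt4E (negbTE a1n) (negbTE a3n) (negbTE a4n).
split; first by apply/peq_pt4; exists (- b1 / a1); split; [neq0 | field_neq0 ..].
move/eqP: h5; rewrite eqf_sqr => /orP[] /eqP a2E; subst a2.
- apply: Or42; exists (a1 / a4), (a3 / a4); split.
  + apply: (lincomb2 ((a4 ^+ 2)^-1) (- al / a4 ^+ 2) h3 h6); field_neq0.
  + apply: (lincomb1 ((a4 ^+ 2)^-1) h6); field_neq0.
  + apply/peq_pt4; exists a4^-1; split; [neq0 | field_neq0 ..].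
  + apply/peq_pt4; exists (- a1 / (b1 * a4)); split; [neq0 | field_neq0 ..].
- apply: Or43; exists (a1 / a4), (a3 / a4); split.
  + apply: (lincomb2 ((a4 ^+ 2)^-1) (- al / a4 ^+ 2) h3 h6); field_neq0.
  + apply: (lincomb1 ((a4 ^+ 2)^-1) h6); field_neq0.
  + apply/peq_pt4; exists a4^-1; split; [neq0 | field_neq0 ..].
  + apply/peq_pt4; exists (- a1 / (b1 * a4)); split; [neq0 | field_neq0 ..].
Qed.

Lemma inGamma_classified p q : inGamma al p q -> Gamma_classified p q.
Proof.
have [a1 [a2 [a3 [a4 ->]]]] := pt4_surj p; have [b1 [b2 [b3 [b4 ->]]]] := pt4_surj q.
have [->|a1n] := eqVneq a1 0; have [->|b1n] := eqVneq b1 0.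
- have [->|a4n] := eqVneq a4 0; first exact: classify_e3e4.
  have [->|b4n] := eqVneq b4 0; first exact: classify_e4e3.
  exact: classify_iv.
- exact: classify_e2e1.
- exact: classify_e1e2.
- have [->|a3n] := eqVneq a3 0; [exact: classify_iii | exact: classify_i_ii].
Qed.

Lemma inGamma_functional p q q' : inGamma al p q -> inGamma al p q' -> peq q q'.
Proof.
move=> /inGamma_classified[+ _] /inGamma_classified[+ _].
by move=> /peq_sym; apply: peq_trans.
Qed.

Lemma inGamma_listed p q : inGamma al p q -> Gamma_listed al p q.
Proof. by case/inGamma_classified. Qed.

Lemma inZ_inGamma i p q : inGamma al p q -> inZ al i p -> inZ al i q.
Proof.
move=> G; have peq_image p' q' : inGamma al p' q' -> peq p p' -> peq q q'.
  by move=> G' /peq_sym pp'; apply: inGamma_functional G (inGamma_peq G' pp' (peq_refl _)).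
rewrite /inZ; case: i => -[|[|[|[|[|//]]]]] _ /=.
- case=> hp; [apply: Or42 | apply: Or41 | apply: Or44 | apply: Or43]; apply: peq_image hp.
  + exact: inGamma_e1e2.
  + exact/inGamma_sym/inGamma_e1e2.
  + exact: inGamma_e3e4.
  + exact/inGamma_sym/inGamma_e3e4.
- case=> l1 [l3 [h1 h3 hp]]; exists (- l1), l3; rewrite sqrrN; split=> //.
  exact: peq_image (inGamma_i h1 h3) hp.
- case=> l1 [l3 [h1 h3 hp]]; exists (- l1), l3; rewrite sqrrN; split=> //.
  exact: peq_image (inGamma_ii h1 h3) hp.
- case=> l1 [l2 [h1 h2 hp]]; exists (- l1), (- l2); rewrite !sqrrN; split=> //.
  exact: peq_image (inGamma_iii al h1 h2) hp.
- case=> l2 [l3 [hq h3 hp]]; have l2n := palindromic_root_neq0 al0 hq.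
  exists l2^-1, (l3 / l2 ^+ 2); split.
  + by apply: (lincomb1 ((l2 ^+ 2)^-1) hq); field_neq0.
  + by apply: (lincomb1 ((l2 ^+ 4)^-1) h3); field_neq0.
  + apply: peq_trans (peq_image _ _ (inGamma_iv al0 hq h3) hp) _.
    by apply/peq_pt4; exists (l2 ^+ 2)^-1; split; [neq0 | field_neq0 ..].
Qed.

End Classification.

Ltac contra_eq := match goal with
  | H : _ = _ |- _ => move: H; rewrite ?(mul1r, mulr1, mul0r, mulr0) => /eqP;
                     apply/negP; by [| rewrite eq_sym]
  end.

Ltac pick_orbit :=
  let rec go n := first [exists (@Ordinal 10 n isT); by [left | right]
                        | let m := constr:(S n) in go m] in
  go 0%N.

(* Proportional vectors have vanishing 2x2 minors; each non-proportionality below is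
   refuted by one minor together with a nonvanishing or sign fact from the context. *)
Ltac not_peq := case/peq_pt4_cross => ? ? ? [? ? ?]; contra_eq.

Section TenOrbits.
Variables (k : fieldType) (al : k).
Hypotheses (hchar : (2%:R : k) != 0) (al0 : al != 0).
Hypotheses (al_m1 : 1 - al != 0) (al_p1 : 1 + al != 0).
Variables s t u v w r z : k.
Hypotheses (hs : s ^+ 2 = - 2 * (1 + al)) (ht : t ^+ 2 = 2)
  (hu : u ^+ 2 = - 2 * (1 - al)) (hv : v ^+ 2 = - 2) (hw : w ^+ 2 = - 1)
  (hr : al * r ^+ 2 + 2 * r + al = 0) (hz : al * z ^+ 2 = - 2 * r ^+ 2).

Definition orbit_rep (j : 'I_10) : 'rV[k]_4 * 'rV[k]_4 :=
  match val j with
  | 0 => (e1 k, e2 k)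
  | 1 => (e3 k, e4 k)
  | 2 => (pt4 s 1 t 1, pt4 (- s) 1 t 1)
  | 3 => (pt4 s 1 (- t) 1, pt4 (- s) 1 (- t) 1)
  | 4 => (pt4 u (-1) v 1, pt4 (- u) (-1) v 1)
  | 5 => (pt4 u (-1) (- v) 1, pt4 (- u) (-1) (- v) 1)
  | 6 => (pt4 v w 0 1, pt4 (- v) (- w) 0 1)
  | 7 => (pt4 v (- w) 0 1, pt4 (- v) w 0 1)
  | 8 => (pt4 0 r z 1, pt4 0 r^-1 (z / r ^+ 2) 1)
  | _ => (pt4 0 r (- z) 1, pt4 0 r^-1 (- (z / r ^+ 2)) 1)
  end%N.

Let one_neq0 : (1 : k) != 0 := oner_neq0 k.
Let one_neqN1 : (1 : k) != -1 := neq_oppr hchar one_neq0.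
Let r_neq0 : r != 0 := palindromic_root_neq0 al0 hr.
Let s_neq0 : s != 0. Proof. by apply: sqr_root_neq0 hs _; neq0. Qed.
Let t_neq0 : t != 0. Proof. by apply: sqr_root_neq0 ht _; neq0. Qed.
Let u_neq0 : u != 0. Proof. by apply: sqr_root_neq0 hu _; neq0. Qed.
Let v_neq0 : v != 0. Proof. by apply: sqr_root_neq0 hv _; neq0. Qed.
Let w_neq0 : w != 0. Proof. by apply: sqr_root_neq0 hw _; neq0. Qed.
Let z_neq0 : z != 0.
Proof. by apply: sqr_root_neq0 (_ : _ = - 2 * r ^+ 2 / al) _; [rewrite -hz; field | neq0]. Qed.
Let Ns_neq0 : - s != 0. Proof. by rewrite oppr_eq0. Qed.
Let Nt_neq0 : - t != 0. Proof. by rewrite oppr_eq0. Qed.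
Let Nu_neq0 : - u != 0. Proof. by rewrite oppr_eq0. Qed.
Let Nv_neq0 : - v != 0. Proof. by rewrite oppr_eq0. Qed.
Let s_neqN : s != - s := neq_oppr hchar s_neq0.
Let t_neqN : t != - t := neq_oppr hchar t_neq0.
Let u_neqN : u != - u := neq_oppr hchar u_neq0.
Let v_neqN : v != - v := neq_oppr hchar v_neq0.
Let w_neqN : w != - w := neq_oppr hchar w_neq0.
Let z_neqN : z != - z := neq_oppr hchar z_neq0.
Let r_neqV : r != r^-1.
Proof.
apply/eqP => rV; have r2 : r ^+ 2 = 1 by rewrite expr2 {2}rV mulfV.
have : 2%:R * (r + al) = 0 by apply: (lincomb2 1 (- al) hr r2); ring.
move/eqP; rewrite mulf_eq0 (negbTE hchar) addr_eq0 => /eqP ral.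
have : (1 - al) * (1 + al) = 0 by apply: (lincomb2 (-1) (r - al) r2 ral); ring.
by apply/eqP; rewrite mulf_neq0.
Qed.

Lemma orbit_rep_inGamma j : inGamma al (orbit_rep j).1 (orbit_rep j).2.
Proof.
have iv z' : al * z' ^+ 2 = - 2 * r ^+ 2 ->
    inGamma al (pt4 0 r z' 1) (pt4 0 r^-1 (z' / r ^+ 2) 1).
  move=> hz'; have r0 := palindromic_root_neq0 al0 hr.
  apply: inGamma_peq (inGamma_iv al0 hr hz') (peq_refl _) _.
  by apply/peq_pt4; exists (r ^+ 2)^-1; split; [neq0 | field_neq0 ..].
rewrite /orbit_rep; case: j => -[|[|[|[|[|[|[|[|[|j]]]]]]]]] _ /=.
- exact: inGamma_e1e2.
- exact: inGamma_e3e4.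
- exact: inGamma_i.
- exact: inGamma_i hs (etrans (sqrrN t) ht).
- exact: inGamma_ii.
- exact: inGamma_ii hu (etrans (sqrrN v) hv).
- exact: inGamma_iii.
- by move: (inGamma_iii al hv (etrans (sqrrN w) hw)); rewrite opprK.
- exact: iv.
- by rewrite -mulNr; apply: iv; rewrite sqrrN.
Qed.

Lemma orbit_rep_nondeg j : ~ peq (orbit_rep j).1 (orbit_rep j).2.
Proof.
by rewrite /orbit_rep /e1 /e2 /e3 /e4; case: j => -[|[|[|[|[|[|[|[|[|j]]]]]]]]] _ /=;
  not_peq.
Qed.

Lemma orbit_rep_disjoint j j' : j != j' ->
  ~ peq (orbit_rep j).1 (orbit_rep j').1 /\ ~ peq (orbit_rep j).1 (orbit_rep j').2.
Proof.
rewrite /orbit_rep /e1 /e2 /e3 /e4.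
case: j j' => [[|[|[|[|[|[|[|[|[|[|//]]]]]]]]]] _] [[|[|[|[|[|[|[|[|[|[|//]]]]]]]]]] _] //= _;
  by split; not_peq.
Qed.

Lemma orbit_rep_cover p q : inGamma al p q ->
  exists j, peq p (orbit_rep j).1 \/ peq p (orbit_rep j).2.
Proof.
case/(inGamma_listed hchar al0).
- by case=> -[hp _]; pick_orbit.
- case=> l1 [l3 [h1 h3 hp _]].
  have [l1E|l1E] := sqrf_eq_cases (etrans h1 (esym hs));
  have [l3E|l3E] := sqrf_eq_cases (etrans h3 (esym ht));
  by rewrite l1E l3E in hp; pick_orbit.
- case=> l1 [l3 [h1 h3 hp _]].
  have [l1E|l1E] := sqrf_eq_cases (etrans h1 (esym hu));
  have [l3E|l3E] := sqrf_eq_cases (etrans h3 (esym hv));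
  by rewrite l1E l3E in hp; pick_orbit.
- case=> l1 [l2 [[h1 h2 hp _] | [m2 [m3 [hm2 hm3 hp _]]]]].
    have [l1E|l1E] := sqrf_eq_cases (etrans h1 (esym hv));
    have [l2E|l2E] := sqrf_eq_cases (etrans h2 (esym hw));
    by rewrite l1E l2E in hp; pick_orbit.
  have [m2E|m2E] := palindromic_roots al0 hr hm2; rewrite m2E in hm3 hp.
    have [m3E|m3E] := sqrf_eq_cases (mulfI al0 (etrans hm3 (esym hz)));
    by rewrite m3E in hp; pick_orbit.
  have hzV : al * (z / r ^+ 2) ^+ 2 = - 2 * r^-1 ^+ 2.
    by apply: (lincomb1 ((r ^+ 4)^-1) hz); field_neq0.
  have [m3E|m3E] := sqrf_eq_cases (mulfI al0 (etrans hm3 (esym hzV)));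
  by rewrite m3E in hp; pick_orbit.
Qed.

Lemma orbit_rep_ten_orbits :
  [/\ forall j, [/\ inGamma al (orbit_rep j).1 (orbit_rep j).2,
                    inGamma al (orbit_rep j).2 (orbit_rep j).1
                  & ~ peq (orbit_rep j).1 (orbit_rep j).2],
      forall j j', j != j' ->
        ~ peq (orbit_rep j).1 (orbit_rep j').1 /\ ~ peq (orbit_rep j).1 (orbit_rep j').2
    & forall p q, inGamma al p q -> inGamma al q p -> ~ peq p q ->
        exists j, peq p (orbit_rep j).1 \/ peq p (orbit_rep j).2].
Proof.
split; [| exact: orbit_rep_disjoint | by move=> p q G _ _; apply: orbit_rep_cover G].
move=> j; have G := orbit_rep_inGamma j.
by split; [| exact: inGamma_sym | exact: orbit_rep_nondeg].
Qed.

End TenOrbits.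

Section Closed.
Variable k : closedFieldType.

Lemma sqrt_exists (a : k) : exists x, x ^+ 2 = a.
Proof.
have [x hx] := @solve_monicpoly k 2 (fun i => if i == 0%N then a else 0) isT.
by exists x; rewrite hx !big_ord_recl big_ord0 /=; ring.
Qed.

Lemma palindromic_root_exists (al : k) : al != 0 -> exists r, al * r ^+ 2 + 2 * r + al = 0.
Proof.
move=> al0.
have [x hx] := @solve_monicpoly k 2 (fun i => if i == 0%N then -1 else - 2 / al) isT.
exists x; move: hx; rewrite !big_ord_recl big_ord0 /= => hx.
by apply: (lincomb1 al hx); field_neq0.
Qed.

End Closed.

Unset Implicit Arguments. Set Strict Implicit.

Theorem corollary2p3 (k : closedFieldType) (al : k)
    (hchar : (2%:R : k) != 0) (hal : al * (1 - al ^+ 2) != 0) :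
  [/\ (* Gamma is the graph of a map sigma on p (well-defined on P^3),
         with sigma(p) contained in p *)
      [/\ (forall p q q', inGamma al p q -> inGamma al p q' -> peq q q'),
          (forall p p' q, inGamma al p q -> peq p p' -> inGamma al p' q) &
          (forall p q, inGamma al p q -> exists r, inGamma al q r)],
      (* the points of Gamma are exactly those listed in (o)-(iv) *)
      (forall p q, inGamma al p q <-> Gamma_listed al p q),
      (* sigma(Z_i) = Z_i *)
      (forall (i : 'I_5) p q, inGamma al p q -> (inZ al i p <-> inZ al i q)) &
      (* sigma has exactly ten orbits of order two *)
      exists O : 'I_10 -> 'rV[k]_4 * 'rV[k]_4,
        [/\ forall j, [/\ inGamma al (O j).1 (O j).2, inGamma al (O j).2 (O j).1
                        & ~ peq (O j).1 (O j).2],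
            forall j j', j != j' -> ~ peq (O j).1 (O j').1 /\ ~ peq (O j).1 (O j').2
          & forall p q, inGamma al p q -> inGamma al q p -> ~ peq p q ->
              exists j, peq p (O j).1 \/ peq p (O j).2]].
Proof.
have [al0 al_m1 al_p1] : [/\ al != 0, 1 - al != 0 & 1 + al != 0].
  move: hal; rewrite (_ : 1 - al ^+ 2 = (1 - al) * (1 + al)); last by ring.
  by rewrite !mulf_eq0 !negb_or => /and3P.
have [s hs] := sqrt_exists (- 2 * (1 + al)).
have [t ht] := sqrt_exists (2%:R : k).
have [u hu] := sqrt_exists (- 2 * (1 - al)).
have [v hv] := sqrt_exists (- 2 : k).
have [w hw] := sqrt_exists (- 1 : k).
have [r hr] := palindromic_root_exists al0.
have [z hz] : exists z, al * z ^+ 2 = - 2 * r ^+ 2.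
  by have [z hz] := sqrt_exists (- 2 * r ^+ 2 / al); exists z; rewrite hz; field.
split.
- split; [exact: inGamma_functional | exact: inGamma_scale |].
  by move=> p q /inGamma_sym; exists p.
- by move=> p q; split; [exact: inGamma_listed | exact: listed_inGamma].
- by move=> i p q G; split; apply: inZ_inGamma => //; exact: inGamma_sym.
exists (orbit_rep s t u v w r z).
exact (orbit_rep_ten_orbits hchar al0 al_m1 al_p1 hs ht hu hv hw hr hz).
Qed.
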